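(* Let $(\mathbb{K},|\cdot|)$ be an algebraically closed normed field, $f\in\mathbb{K}[z]$ a polynomial of degree $n\ge2$, $\xi\in\mathbb{K}^n$ a root-vector of $f$, $N\ge1$ and $1\le p\le\infty$. Suppose $x^{(0)}\in\mathbb{K}^n$ has pairwise distinct components and $\Psi(E(x^{(0)}))\le2$. Then $f$ has only simple zeros, and the $N$th Weierstrass-type iteration $x^{(k+1)}=T^{(N)}(x^{(k)})$ is well-defined and converges to $\xi$ with error estimates \[ \|x^{(k+1)}-\xi\|\preceq\lambda^{N(N+1)^k}\|x^{(k)}-\xi\|,\qquad \|x^{(k)}-\xi\|\preceq\lambda^{(N+1)^k-1}\|x^{(0)}-\xi\| \] for all $k\ge0$, where $\lambda=\phi(E(x^{(0)}))$. Moreover, if $\Psi(E(x^{(0)}))<2$, the iteration converges to $\xi$ with order of convergence $N+1$.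
   Context: $a_0$ is the leading coefficient of $f$. For $1\le p\le\infty$, $\|x\|_p=(\sum_i|x_i|^p)^{1/p}$ (max-norm if $p=\infty$). For $x\in\mathbb{K}^n$, $\|x\|=(|x_1|,\dots,|x_n|)\in\mathbb{R}^n$ and $\preceq$ is the coordinatewise order on $\mathbb{R}^n$. $d(x)=(d_1(x),\dots,d_n(x))$, $d_i(x)=\min_{j\ne i}|x_i-x_j|$; for $x\in\mathbb{K}^n$, $y\in\mathbb{R}^n$ with nonzero components, $x/y=(|x_1|/y_1,\dots,|x_n|/y_n)$. A root-vector of $f$ is $\xi\in\mathbb{K}^n$ with $f(z)=a_0\prod_i(z-\xi_i)$ for all $z$. $E(x)=\|(x-\xi)/d(x)\|_p$. Weierstrass-type maps: $T^{(0)}(x)=x$ on $D_0=\mathbb{K}^n$; $D_{N+1}=\{x\in D_N: x_i\ne T^{(N)}_j(x)\ \forall i\ne j\}$, and for $x\in D_{N+1}$, $T^{(N+1)}_i(x)=x_i-\dfrac{f(x_i)}{a_0\prod_{j\ne i}(x_i-T^{(N)}_j(x))}$. The iteration is well-defined if $x^{(k)}\in D_N$ for all $k$. $\omega(t)=\left(1+\frac{t}{(n-1)^{1/p}}\right)^{n-1}$ (with $(n-1)^{1/p}=1$ if $p=\infty$), $\Psi(t)=(1+2t)\omega(t)$ for $t\ge0$, $R$ the unique positive solution of $\Psi(t)=2$, and $\phi(t)=\dfrac{\omega(t)-1}{1-2t\omega(t)}$ for $t\in[0,R]$. *)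

From HB Require Import structures.
From mathcomp Require Import all_boot all_order all_algebra.
From mathcomp Require Import all_classical all_reals all_analysis.
Set Implicit Arguments. Unset Strict Implicit. Unset Printing Implicit Defensive.
Import Order.TTheory GRing.Theory Num.Theory.
Import numFieldNormedType.Exports.
Local Open Scope classical_set_scope.
Local Open Scope ring_scope.

Definition is_abs (K : fieldType) (R : realType) (abs : K -> R) : Prop :=
  [/\ forall x, abs x = 0 <-> x = 0,
      forall x, 0 <= abs x,
      forall x y, abs (x * y) = abs x * abs y
    & forall x y, abs (x + y) <= abs x + abs y].

Definition pnorm (R : realType) (n : nat) (p : \bar R) (v : 'I_n -> R) : R :=
  match p with
  | EFin r => (\sum_(i < n) `|v i| `^ r) `^ (r^-1)
  | +oo%E => \big[Num.max/0]_(i < n) `|v i|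
  | -oo%E => 0
  end.

Definition rootp (R : realType) (n : nat) (p : \bar R) : R :=
  match p with
  | EFin r => (n.-1)%:R `^ (r^-1)
  | _ => 1
  end.

Definition omega (R : realType) (n : nat) (p : \bar R) (t : R) : R :=
  (1 + t / rootp n p) ^+ n.-1.

Definition Psi (R : realType) (n : nat) (p : \bar R) (t : R) : R :=
  (1 + 2 * t) * omega n p t.

Definition phi (R : realType) (n : nat) (p : \bar R) (t : R) : R :=
  (omega n p t - 1) / (1 - 2 * t * omega n p t).

(* d_i(x) = min_{j <> i} |x_i - x_j|  (for n >= 2 the index set is nonempty;
   the seed of the min is an upper bound of all the terms). *)
Definition dvec (K : fieldType) (R : realType) (abs : K -> R) (n : nat)
    (x : 'I_n -> K) (i : 'I_n) : R :=
  \big[Num.min/ \sum_(j < n | j != i) abs (x i - x j)]_(j < n | j != i)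
     abs (x i - x j).

Definition Efun (K : fieldType) (R : realType) (abs : K -> R) (n : nat)
    (p : \bar R) (xi x : 'I_n -> K) : R :=
  pnorm p (fun i => abs (x i - xi i) / dvec abs x i).

Definition root_vector (K : fieldType) (n : nat) (f : {poly K}) (xi : 'I_n -> K)
  : Prop := forall z, f.[z] = lead_coef f * \prod_(i < n) (z - xi i).

(* Weierstrass-type maps T^(N) (as total functions) ... *)
Fixpoint Tmap (K : fieldType) (n : nat) (f : {poly K}) (N : nat) (x : 'I_n -> K)
  : 'I_n -> K :=
  match N with
  | 0%N => x
  | N'.+1 => fun i =>
      x i - f.[x i] / (lead_coef f * \prod_(j < n | j != i) (x i - Tmap f N' x j))
  end.

Fixpoint inD (K : fieldType) (n : nat) (f : {poly K}) (N : nat) (x : 'I_n -> K)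
  : Prop :=
  match N with
  | 0%N => True
  | N'.+1 => inD f N' x /\ (forall i j : 'I_n, i != j -> x i != Tmap f N' x j)
  end.

Definition iterT (K : fieldType) (n : nat) (f : {poly K}) (N : nat)
    (x0 : 'I_n -> K) (k : nat) : 'I_n -> K := iter k (Tmap f N) x0.

Definition maxerr (K : fieldType) (R : realType) (abs : K -> R) (n : nat)
    (x xi : 'I_n -> K) : R := \big[Num.max/0]_(i < n) abs (x i - xi i).

Definition conv_order (K : fieldType) (R : realType) (abs : K -> R) (n : nat)
    (x : nat -> 'I_n -> K) (xi : 'I_n -> K) (r : nat) : Prop :=
  (forall i, (fun k => abs (x k i - xi i)) @ \oo --> (0 : R)) /\
  exists C : R, forall k, maxerr abs (x k.+1) xi <= C * maxerr abs (x k) xi ^+ r.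

(* Write t_i = |x_i - xi_i| / d_i(x), so that E(x) is the p-norm of t.  From
   f = a_0 prod_j (z - xi_j) one gets the exact identity
     x_i - T^(m+1)_i(x) = (x_i - xi_i) prod_{j <> i} (1 + (T^(m)_j(x) - xi_j) / (x_i - T^(m)_j(x))).
   Induction on m, with AM-GM and the power-mean inequality turning the p-norm of t into
   omega, shows that T^(m+1)(x) reduces every error |x_i - xi_i| by the factor
   (omega(E) - 1) phi(E)^m, and that E(T^(N)(x)) <= phi(E)^N E(x).  Since phi(s E) <= s phi(E)
   for s in [0, 1], phi(E(x^(k))) <= lambda^((N+1)^k), which gives the error estimates;
   near the limit E(x^(k)) and hence phi(E(x^(k))) are linear in the error, whence the
   order N + 1.  Finally 2 E(x) < 1 forces |xi_i - xi_j| >= (1 - 2 E) |x_i - x_j| > 0, so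
   the zeros of f are simple. *)
From HB Require Import structures.
From mathcomp Require Import all_boot all_order all_algebra.
From mathcomp Require Import all_classical all_reals all_analysis.
From mathcomp Require Import ring lra zify.
Import Order.TTheory GRing.Theory Num.Theory.
Import numFieldNormedType.Exports.
Local Open Scope classical_set_scope.
Local Open Scope ring_scope.
Set Implicit Arguments. Unset Strict Implicit. Unset Printing Implicit Defensive.

Section AbsoluteValue.
Variables (K : fieldType) (R : realType) (abs : K -> R).
Hypothesis habs : is_abs abs.

Lemma abs_eq0 x : abs x = 0 <-> x = 0. Proof. by case: habs. Qed.
Lemma abs_ge0 x : 0 <= abs x. Proof. by case: habs. Qed.
Lemma absM x y : abs (x * y) = abs x * abs y. Proof. by case: habs. Qed.
Lemma absD_le x y : abs (x + y) <= abs x + abs y. Proof. by case: habs. Qed.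

Lemma abs0 : abs 0 = 0. Proof. exact/abs_eq0. Qed.

Lemma abs_gt0 x : x != 0 -> 0 < abs x.
Proof. by move=> x0; rewrite lt_neqAle abs_ge0 andbT eq_sym; apply: contra x0 => /eqP/abs_eq0->. Qed.

Lemma abs1 : abs 1 = 1.
Proof.
have abs10 : abs 1 != 0 by apply/eqP => /abs_eq0/eqP; rewrite oner_eq0.
by apply: (mulfI abs10); rewrite -absM !mulr1.
Qed.

Lemma absN x : abs (- x) = abs x.
Proof.
suff absN1 : abs (-1) = 1 by rewrite -mulN1r absM absN1 mul1r.
have := absM (-1) (-1); rewrite mulrNN mulr1 abs1.
have := abs_ge0 (-1); nra.
Qed.

Lemma abs_distC x y : abs (x - y) = abs (y - x). Proof. by rewrite -absN opprB. Qed.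

Lemma absV x : abs x^-1 = (abs x)^-1.
Proof.
have [->|x0] := eqVneq x 0; first by rewrite invr0 abs0 invr0.
apply: (mulfI (lt0r_neq0 (abs_gt0 x0))).
by rewrite -absM !mulfV ?abs1 ?lt0r_neq0 ?abs_gt0.
Qed.

Lemma abs_div x y : abs (x / y) = abs x / abs y. Proof. by rewrite absM absV. Qed.

Lemma absB_ge x y : abs x - abs y <= abs (x - y).
Proof. by have := absD_le (x - y) y; rewrite subrK; lra. Qed.

Lemma absB_le x y : abs (x - y) <= abs x + abs y.
Proof. by rewrite -(absN y); apply: absD_le. Qed.

Lemma abs_prod (I : Type) (r : seq I) (P : pred I) (F : I -> K) :
  abs (\prod_(j <- r | P j) F j) = \prod_(j <- r | P j) abs (F j).
Proof.
elim: r => [|a r IH]; first by rewrite !big_nil abs1.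
by rewrite !big_cons; case: (P a); rewrite ?absM IH.
Qed.

Lemma abs_prod1D_sub1 (I : Type) (r : seq I) (P : pred I) (u : I -> K) :
  abs (\prod_(j <- r | P j) (1 + u j) - 1) <= \prod_(j <- r | P j) (1 + abs (u j)) - 1.
Proof.
elim: r => [|a r IH]; first by rewrite !big_nil subrr abs0.
rewrite !big_cons; case: (P a) => //.
set Pu := \prod_(j <- r | P j) (1 + u j) in IH *.
set Q := \prod_(j <- r | P j) (1 + abs (u j)) in IH *.
have -> : (1 + u a) * Pu - 1 = u a * Pu + (Pu - 1) by ring.
apply: le_trans (absD_le _ _) _; rewrite absM.
have PuQ : abs Pu <= Q by have := absD_le (Pu - 1) 1; rewrite subrK abs1; lra.
have : abs (u a) * abs Pu <= abs (u a) * Q by apply: ler_wpM2l; rewrite ?abs_ge0.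
have := abs_ge0 (u a); have := abs_ge0 Pu; nra.
Qed.

End AbsoluteValue.

Section PowerMean.
Variable R : realType.

Lemma powR_convex (r l u v : R) : 1 <= r -> 0 <= l <= 1 -> 0 <= u -> 0 <= v ->
  (l * u + (1 - l) * v) `^ r <= l * u `^ r + (1 - l) * v `^ r.
Proof.
move=> r1 l01 u0 v0.
have l01' : Itv.spec (@Itv.num_sem R) (Itv.Real `[0, 1]%Z) l.
  by rewrite /Itv.spec /Itv.num_sem /= in_itv /= num_real.
have := @convex_powR R r r1 (@Itv.mk _ _ (Itv.Real `[0, 1]%Z) l l01') u v.
by rewrite !inE /= !in_itv /= !andbT => /(_ u0 v0); rewrite !convRE.
Qed.

Lemma powR_mean_le (r : R) (s : seq R) : 1 <= r -> all (fun a => 0 <= a) s ->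
  (0 < size s)%N ->
  ((\sum_(a <- s) a) / (size s)%:R) `^ r <= (\sum_(a <- s) a `^ r) / (size s)%:R.
Proof.
move=> r1; elim: s => [//|a s IH] /= /andP[a0 s0] _; rewrite !big_cons.
case: s IH s0 => [|b s] IH s0; first by rewrite !big_nil !addr0 !divr1.
set m := size (b :: s); set S := \sum_(c <- b :: s) c.
set Sr := \sum_(c <- b :: s) c `^ r.
have m0 : (0 : R) < m%:R by rewrite ltr0n.
have {IH} IH : (S / m%:R) `^ r <= Sr / m%:R by exact: IH.
have S0 : 0 <= S / m%:R.
  by rewrite divr_ge0 ?(ltW m0) // /S big_seq sumr_ge0 // => c /(allP s0).
pose l : R := 1 / (m%:R + 1).
have m1 : (0 : R) < m%:R + 1 by rewrite ltr_wpDl // ltW.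
have l01 : 0 <= l <= 1.
  by rewrite /l divr_ge0 ?(ltW m1) //= ler_pdivrMr // mul1r lerDr ltW.
have mS : (m.+1%:R : R) = m%:R + 1 by rewrite -addn1 natrD.
have -> : (a + S) / m.+1%:R = l * a + (1 - l) * (S / m%:R).
  by rewrite mS /l; field; rewrite ?lt0r_neq0 //; exact: ltW.
apply: le_trans (powR_convex r1 l01 a0 S0) _.
have l1 : 0 <= 1 - l by case/andP: l01; rewrite subr_ge0.
apply: le_trans (_ : l * a `^ r + (1 - l) * (Sr / m%:R) <= _).
  by rewrite lerD2l ler_wpM2l.
rewrite le_eqVlt; apply/orP; left; apply/eqP.
by rewrite mS /l; field; rewrite ?lt0r_neq0 //; exact: ltW.
Qed.

Lemma expr1DM_sub1_le (m : nat) (c y : R) : 0 <= c <= 1 -> 0 <= y ->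
  (1 + c * y) ^+ m - 1 <= c * ((1 + y) ^+ m - 1).
Proof.
move=> /andP[c0 c1] y0; elim: m => [|m IH]; first by rewrite !expr0 subrr mulr0.
have Y1 : 1 <= (1 + y) ^+ m by rewrite exprn_ege1 // lerDl.
have cy : 0 <= c * y by rewrite mulr_ge0.
have h1 : (1 + c * y) * ((1 + c * y) ^+ m - 1) <= (1 + c * y) * (c * ((1 + y) ^+ m - 1)).
  by rewrite ler_wpM2l ?addr_ge0.
have h2 : c * y * (c * ((1 + y) ^+ m - 1)) <= y * (c * ((1 + y) ^+ m - 1)).
  by rewrite ler_wpM2r ?mulr_ge0 ?subr_ge0 //; nra.
rewrite !exprS; nra.
Qed.

End PowerMean.

Section PNorm.
Variable R : realType.

Lemma ge1_ereal_cases (p : \bar R) :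
  (1 <= p)%E -> p = +oo%E \/ exists2 r : R, 1 <= r & p = r%:E.
Proof.
case: p => [r r1|_|//]; last by left.
by right; exists r => //; rewrite lee_fin in r1.
Qed.

Lemma gt0_powR_le_inv (r x y : R) : 0 < r -> 0 <= x -> 0 <= y ->
  x `^ r <= y `^ r -> x <= y.
Proof.
move=> r0 x0 y0 h; rewrite leNgt; apply/negP => yx.
by have := gt0_ltr_powR r0 y0 x0 yx; rewrite ltNge h.
Qed.

Lemma powRK (r x : R) : 0 < r -> 0 <= x -> (x `^ r) `^ r^-1 = x.
Proof. by move=> r0 x0; rewrite -powRrM mulfV ?gt_eqF // powRr1. Qed.

Lemma powRVK (r x : R) : 0 < r -> 0 <= x -> (x `^ r^-1) `^ r = x.
Proof. by move=> r0 x0; rewrite -powRrM mulVf ?gt_eqF // powRr1. Qed.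

Variables (n : nat) (p : \bar R).
Hypothesis p1 : (1 <= p)%E.

Lemma pnorm_ge0 (v : 'I_n -> R) : 0 <= pnorm p v.
Proof.
case: (ge1_ereal_cases p1) => [->|[r r1 ->]] /=; last exact: powR_ge0.
by elim/big_ind: _ => //= x y x0 y0; rewrite le_max x0.
Qed.

Lemma pnorm_ge_comp (v : 'I_n -> R) i : `|v i| <= pnorm p v.
Proof.
case: (ge1_ereal_cases p1) => [->|[r r1 ->]] /=; first exact: le_bigmax.
have r0 : 0 < r by lra.
rewrite -{1}(@powRK r `|v i|) //.
apply: ge0_ler_powR.
- by rewrite invr_ge0; lra.
- by rewrite nnegrE powR_ge0.
- by rewrite nnegrE sumr_ge0 // => j _; rewrite powR_ge0.
by rewrite (bigD1 i) //= lerDl sumr_ge0 // => j _; rewrite powR_ge0.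
Qed.

Lemma pnorm_le_scale (v w : 'I_n -> R) (c : R) : 0 <= c ->
  (forall i, `|v i| <= c * `|w i|) -> pnorm p v <= c * pnorm p w.
Proof.
move=> c0 vw; case: (ge1_ereal_cases p1) => [->|[r r1 ->]] /=.
  apply: bigmax_le => [|j _]; first by rewrite mulr_ge0 // bigmax_ge_id.
  by apply: le_trans (vw j) _; rewrite ler_wpM2l // le_bigmax.
have r0 : 0 < r by lra.
have Sw0 : 0 <= \sum_(j < n) `|w j| `^ r by rewrite sumr_ge0 // => j _; rewrite powR_ge0.
rewrite -[c in c * _](@powRK r) // -powRM ?powR_ge0 //.
apply: ge0_ler_powR.
- by rewrite invr_ge0; lra.
- by rewrite nnegrE sumr_ge0 // => j _; rewrite powR_ge0.
- by rewrite nnegrE mulr_ge0 // powR_ge0.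
rewrite mulr_sumr; apply: ler_sum => j _.
by rewrite -powRM //; apply: ge0_ler_powR; rewrite ?nnegrE ?mulr_ge0 //; lra.
Qed.

Lemma pnorm_le_sum (v : 'I_n -> R) : pnorm p v <= \sum_(j < n) `|v j|.
Proof.
have T0 : 0 <= \sum_(j < n) `|v j| by rewrite sumr_ge0.
case: (ge1_ereal_cases p1) => [->|[r r1 ->]] /=.
  by apply: bigmax_le => // j _; rewrite (bigD1 j) //= lerDl sumr_ge0.
have r0 : 0 < r by lra.
set T := \sum_(j < n) `|v j| in T0 *.
rewrite -(@powRK r T) //.
apply: ge0_ler_powR.
- by rewrite invr_ge0; lra.
- by rewrite nnegrE sumr_ge0 // => j _; rewrite powR_ge0.
- by rewrite nnegrE powR_ge0.
rewrite -mulr_powRB1 // mulr_suml; apply: ler_sum => j _.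
rewrite -mulr_powRB1 // ler_wpM2l //.
apply: ge0_ler_powR; rewrite ?nnegrE //; first lra.
by rewrite /T (bigD1 j) //= lerDl sumr_ge0.
Qed.

(* This is where the normalisation (n-1)^{1/p} in omega comes from. *)
Lemma mean_predC1_le_pnorm (v : 'I_n -> R) (i : 'I_n) : (1 < n)%N ->
  (\sum_(j < n | j != i) `|v j|) / (n.-1)%:R <= pnorm p v / rootp n p.
Proof.
move=> n1.
have n10 : (0 < n.-1)%N by rewrite -subn1 subn_gt0.
have m0 : (0 : R) < (n.-1)%:R by rewrite ltr0n.
case: (ge1_ereal_cases p1) => [->|[r r1 ->]] /=.
  rewrite divr1 ler_pdivrMr //.
  apply: le_trans (_ : \sum_(j < n | j != i) \big[Num.max/0]_(k < n) `|v k| <= _).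
    by apply: ler_sum => j _; apply: le_bigmax.
  by rewrite sumr_const cardC1 card_ord mulr_natr.
have r0 : 0 < r by lra.
set A := (\sum_(j < n | j != i) `|v j|) / (n.-1)%:R.
set S := \sum_(k < n) `|v k| `^ r.
have A0 : 0 <= A by rewrite divr_ge0 ?sumr_ge0 // ltW.
have S0 : 0 <= S by rewrite sumr_ge0 // => j _; rewrite powR_ge0.
have root0 : 0 < (n.-1)%:R `^ r^-1 by rewrite powR_gt0.
rewrite ler_pdivlMr //.
apply: (@gt0_powR_le_inv r) => //; rewrite ?mulr_ge0 ?powR_ge0 //; first by rewrite sumr_ge0.
rewrite powRM ?powR_ge0 // powRVK ?powRVK //; try exact: ltW.
have := @powR_mean_le R r [seq `|v j| | j <- enum (predC1 i)] r1.
rewrite size_map -cardE cardC1 card_ord !big_map !big_enum /=.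
have nonneg : all (fun a => 0 <= a) [seq `|v j| | j <- enum (predC1 i)].
  by apply/allP => a /mapP[j _ ->].
move=> /(_ nonneg n10) mean_le.
rewrite -ler_pdivlMr //; apply: le_trans mean_le _.
rewrite ler_pM2r ?invr_gt0 // /S [X in _ <= X](bigD1 i) //=.
by rewrite -[X in X <= _]add0r lerD2r powR_ge0.
Qed.

End PNorm.

Section OmegaPhi.
Variables (R : realType) (n : nat) (p : \bar R).
Hypotheses (p1 : (1 <= p)%E) (n1 : (1 < n)%N).

Lemma rootp_gt0 : 0 < rootp n p :> R.
Proof.
by case: (ge1_ereal_cases p1) => [->|[r r1 ->]] //=; rewrite powR_gt0 // ltr0n -subn1 subn_gt0.
Qed.

Lemma omega0 : omega n p 0 = 1.
Proof. by rewrite /omega mul0r addr0 expr1n. Qed.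

Lemma omega_ge1 (t : R) : 0 <= t -> 1 <= omega n p t.
Proof. by move=> t0; rewrite /omega exprn_ege1 // lerDl divr_ge0 // ltW // rootp_gt0. Qed.

Lemma omega_gt1 (t : R) : 0 < t -> 1 < omega n p t.
Proof.
move=> t0; have rp := rootp_gt0.
rewrite /omega expr_gt1 ?addr_ge0 ?divr_ge0 ?ltW //; last by rewrite -subn1 subn_gt0.
by rewrite ltrDl divr_gt0.
Qed.

Lemma omega_le (s t : R) : 0 <= s -> s <= t -> omega n p s <= omega n p t.
Proof.
move=> s0 st; have t0 := le_trans s0 st; have rp := rootp_gt0.
rewrite /omega lerXn2r ?nnegrE ?addr_ge0 ?divr_ge0 ?(ltW rp) //.
by rewrite lerD2l ler_pM2r ?invr_gt0.
Qed.

Lemma omega_sub1_scale (c t : R) : 0 <= c <= 1 -> 0 <= t ->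
  omega n p (c * t) - 1 <= c * (omega n p t - 1).
Proof.
by move=> c01 t0; rewrite /omega -mulrA expr1DM_sub1_le // divr_ge0 // ltW // rootp_gt0.
Qed.

(* AM-GM on the n - 1 factors, then the power-mean inequality. *)
Lemma prod1D_le_omega (t s : 'I_n -> R) (i : 'I_n) (c : R) :
  (forall j, 0 <= t j) -> 0 <= c -> (forall j, j != i -> 0 <= s j <= c * t j) ->
  \prod_(j < n | j != i) (1 + s j) <= omega n p (c * pnorm p t).
Proof.
move=> t0 c0 st.
apply: le_trans (_ : \prod_(j < n | j != i) (1 + c * t j) <= _).
  apply: ler_prod => j ji; have /andP[s0 sc] := st j ji.
  by rewrite addr_ge0 //= lerD2l.
have hA : {in predC1 i, forall j, 0 <= 1 + c * t j}.
  by move=> j _; rewrite addr_ge0 // mulr_ge0.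
apply: le_trans (leif_AGM hA).1 _; rewrite cardC1 card_ord.
have m0 : (0 : R) < (n.-1)%:R by rewrite ltr0n -subn1 subn_gt0.
rewrite /omega lerXn2r ?nnegrE //.
- by rewrite divr_ge0 ?sumr_ge0 // => j _; rewrite addr_ge0 // mulr_ge0.
- by rewrite addr_ge0 // divr_ge0 ?mulr_ge0 ?pnorm_ge0 // ltW // rootp_gt0.
rewrite big_split /= sumr_const cardC1 card_ord -mulr_sumr mulrDl.
rewrite mulfV ?gt_eqF // lerD2l -!mulrA ler_wpM2l //.
apply: le_trans (mean_predC1_le_pnorm p1 t i n1); rewrite ler_pM2r ?invr_gt0 //.
by apply: ler_sum => j _; rewrite ger0_norm.
Qed.

Lemma Psi_le (s t : R) : 0 <= s -> s <= t -> Psi n p s <= Psi n p t.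
Proof.
move=> s0 st; have t0 := le_trans s0 st; rewrite /Psi.
apply: ler_pM.
- by rewrite addr_ge0 ?mulr_ge0.
- exact: le_trans ler01 (omega_ge1 s0).
- by rewrite lerD2l ler_pM2l.
- exact: omega_le.
Qed.

Section PsiLe2.
Variable E : R.
Hypotheses (E0 : 0 <= E) (PsiE : Psi n p E <= 2).

Lemma Psi_le2_half : E <= 2^-1.
Proof. by have := omega_ge1 E0; move: PsiE; rewrite /Psi; nra. Qed.

Lemma phi_den_gt0 : 0 < 1 - 2 * E * omega n p E.
Proof.
have [->|E_neq0] := eqVneq E 0; first by rewrite mulr0 mul0r subr0.
have Epos : 0 < E by rewrite lt_neqAle eq_sym E_neq0.
by have := omega_gt1 Epos; move: PsiE; rewrite /Psi; nra.
Qed.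

Lemma omega_lt2 : omega n p E < 2.
Proof.
have [->|E_neq0] := eqVneq E 0; first by rewrite omega0 ltr1n.
have Epos : 0 < E by rewrite lt_neqAle eq_sym E_neq0.
by have := omega_gt1 Epos; move: PsiE; rewrite /Psi; nra.
Qed.

Lemma phi_ge0 : 0 <= phi n p E.
Proof.
by apply: divr_ge0; [rewrite subr_ge0; apply: omega_ge1 | apply: ltW; apply: phi_den_gt0].
Qed.

Lemma phi_le1 : phi n p E <= 1.
Proof.
by rewrite /phi ler_pdivrMr ?phi_den_gt0 // mul1r; move: PsiE; rewrite /Psi; nra.
Qed.

Lemma omega_sub1_le_phi : omega n p E - 1 <= phi n p E.
Proof.
have d0 := phi_den_gt0; have w1 := omega_ge1 E0.
rewrite /phi ler_pdivlMr //.
have : 0 <= (omega n p E - 1) * (2 * E * omega n p E).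
  by rewrite mulr_ge0 ?mulr_ge0 //; lra.
nra.
Qed.

Lemma phi_den_le (t : R) : 0 <= t -> t <= E ->
  1 - 2 * E * omega n p E <= 1 - 2 * t * omega n p t.
Proof.
move=> t0 tE; have wt := omega_le t0 tE; have wt1 := omega_ge1 t0.
have : t * omega n p t <= E * omega n p E by apply: ler_pM => //; lra.
lra.
Qed.

Lemma phi_le_scale (s t : R) : 0 <= s <= 1 -> 0 <= t -> t <= s * E ->
  phi n p t <= s * phi n p E.
Proof.
move=> /andP[s0 s1] t0 ts.
have tE : t <= E by apply: le_trans ts _; rewrite -{2}(mul1r E) ler_wpM2r.
have d0 := phi_den_gt0; have dt := phi_den_le t0 tE.
have wts := omega_le t0 ts.
have ws := @omega_sub1_scale s E (introT andP (conj s0 s1)) E0.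
have wt1 := omega_ge1 t0.
rewrite /phi mulrA ler_pdivrMr; last exact: lt_le_trans dt.
apply: (@le_trans _ _ (s * (omega n p E - 1))); first lra.
rewrite -[X in X <= _](@divfK _ (1 - 2 * E * omega n p E)) ?gt_eqF //.
apply: ler_wpM2l dt; rewrite divr_ge0 ?(ltW d0) // mulr_ge0 // subr_ge0.
exact: omega_ge1.
Qed.

Lemma phi_le_linear (t : R) : 0 <= t -> t <= E ->
  phi n p t <= t * ((omega n p 1 - 1) / (1 - 2 * E * omega n p E)).
Proof.
move=> t0 tE.
have t1 : t <= 1 by have := Psi_le2_half; lra.
have d0 := phi_den_gt0; have dt := phi_den_le t0 tE.
have wt := @omega_sub1_scale t 1 (introT andP (conj t0 t1)) ler01.
rewrite mulr1 in wt.
have w1 := omega_ge1 ler01.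
rewrite /phi mulrA ler_pdivrMr; last exact: lt_le_trans dt.
apply: (@le_trans _ _ (t * (omega n p 1 - 1))); first lra.
rewrite -[X in X <= _](@divfK _ (1 - 2 * E * omega n p E)) ?gt_eqF //.
by apply: ler_wpM2l dt; rewrite divr_ge0 ?(ltW d0) // mulr_ge0 // subr_ge0.
Qed.

End PsiLe2.
End OmegaPhi.

Section MinDistance.
Variables (K : fieldType) (R : realType) (abs : K -> R) (n : nat).
Hypotheses (habs : is_abs abs) (n1 : (1 < n)%N).

Lemma exists_neq (i : 'I_n) : exists j : 'I_n, j != i.
Proof.
case: (pickP (predC1 i)) => [j ji|none]; first by exists j.
have : #|predC1 i| = 0%N by apply: eq_card0.
by rewrite cardC1 card_ord; move: n1; lia.
Qed.

Lemma dvec_le (x : 'I_n -> K) i j : j != i -> dvec abs x i <= abs (x i - x j).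
Proof. by move=> ji; apply: (bigmin_le_cond _ (fun j => abs (x i - x j))). Qed.

Lemma dvec_ge (x : 'I_n -> K) i b :
  (forall j, j != i -> b <= abs (x i - x j)) -> b <= dvec abs x i.
Proof.
move=> xb; apply/bigmin_geP; split => //.
have [j ji] := exists_neq i.
rewrite (bigD1 j) //=; apply: le_trans (xb j ji) _.
by rewrite lerDl sumr_ge0 // => k _; apply: abs_ge0.
Qed.

Lemma dvec_gt0 (x : 'I_n -> K) i :
  (forall j, j != i -> x i != x j) -> 0 < dvec abs x i.
Proof.
move=> xi_neq; have [j ji] := exists_neq i.
have gt0 k : k != i -> 0 < abs (x i - x k) by move=> ki; rewrite abs_gt0 // subr_eq0 xi_neq.
apply: lt_bigmin => [|k ki]; last exact: gt0.
rewrite (bigD1 j) //=; apply: lt_le_trans (gt0 j ji) _.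
by rewrite lerDl sumr_ge0 // => k _; apply: abs_ge0.
Qed.

End MinDistance.

Section Correction.
Variables (K : fieldType) (n : nat) (f : {poly K}) (xi : 'I_n -> K).
Hypotheses (hf : root_vector f xi) (a0 : lead_coef f != 0).

(* Dividing f(x_i) = a_0 prod_j (x_i - xi_j) by a_0 prod_{j != i} (x_i - y_j). *)
Lemma sub_TmapS m (x : 'I_n -> K) i :
  (forall j, j != i -> x i != Tmap f m x j) ->
  x i - Tmap f m.+1 x i = (x i - xi i) *
    \prod_(j < n | j != i) (1 + (Tmap f m x j - xi j) / (x i - Tmap f m x j)).
Proof.
rewrite [Tmap _ m.+1 _ _]/=; set y := Tmap f m x => xy.
have den0 : \prod_(j < n | j != i) (x i - y j) != 0.
  by rewrite prodf_seq_neq0; apply/allP => j _; apply/implyP => ji; rewrite subr_eq0 xy.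
have -> : \prod_(j < n | j != i) (1 + (y j - xi j) / (x i - y j)) =
          \prod_(j < n | j != i) ((x i - xi j) / (x i - y j)).
  apply: eq_bigr => j ji; have xyj : x i - y j != 0 by rewrite subr_eq0 xy.
  by rewrite -{1}(divff xyj) -mulrDl addrA subrK.
rewrite prodf_div hf (bigD1 i) //=.
by field; rewrite den0 a0.
Qed.

End Correction.

Section MaxError.
Variables (K : fieldType) (R : realType) (abs : K -> R) (n : nat) (xi : 'I_n -> K).

Lemma maxerr_ge0 (x : 'I_n -> K) : 0 <= maxerr abs x xi.
Proof. exact: bigmax_ge_id. Qed.

Lemma maxerr_ge (x : 'I_n -> K) i : abs (x i - xi i) <= maxerr abs x xi.
Proof. exact: (le_bigmax _ (fun i => abs (x i - xi i))). Qed.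

End MaxError.

Section OneStep.
Variables (K : fieldType) (R : realType) (abs : K -> R) (n : nat).
Variables (f : {poly K}) (xi : 'I_n -> K) (p : \bar R).
Hypotheses (habs : is_abs abs) (n1 : (1 < n)%N) (hf : root_vector f xi).
Hypotheses (a0 : lead_coef f != 0) (p1 : (1 <= p)%E).

Definition ratio (z : 'I_n -> K) (i : 'I_n) : R := abs (z i - xi i) / dvec abs z i.

Lemma Efun_ge0 (z : 'I_n -> K) : 0 <= Efun abs p xi z.
Proof. exact: pnorm_ge0. Qed.

Variable x : 'I_n -> K.
Hypotheses (hx : forall i j, i != j -> x i != x j) (hPsi : Psi n p (Efun abs p xi x) <= 2).

Local Notation E := (Efun abs p xi x).
Local Notation t := (ratio x).
Local Notation w := (omega n p E).
Local Notation phE := (phi n p E).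

Let E0 : 0 <= E. Proof. exact: Efun_ge0. Qed.
Let w1 : 1 <= w. Proof. exact: omega_ge1. Qed.
Let d0 : 0 < 1 - 2 * E * w. Proof. exact: phi_den_gt0. Qed.
Let phE0 : 0 <= phE. Proof. exact: phi_ge0. Qed.
Let phE1 : phE <= 1. Proof. exact: phi_le1. Qed.

Lemma dist_gt0 i j : j != i -> 0 < abs (x i - x j).
Proof. by move=> ji; rewrite abs_gt0 // subr_eq0 hx // eq_sym. Qed.

Lemma dvec_x_gt0 i : 0 < dvec abs x i.
Proof. by apply: dvec_gt0 => // j ji; rewrite hx // eq_sym. Qed.

Lemma ratio_ge0 i : 0 <= t i.
Proof. by rewrite divr_ge0 ?abs_ge0 // ltW // dvec_x_gt0. Qed.

Lemma ratio_le_Efun i : t i <= E.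
Proof. by have := pnorm_ge_comp p1 t i; rewrite ger0_norm // ratio_ge0. Qed.

Lemma err_le_ratio_dist i j : j != i -> abs (x i - xi i) <= t i * abs (x i - x j).
Proof.
move=> ji; rewrite -[leLHS](divfK (lt0r_neq0 (dvec_x_gt0 i))).
by rewrite ler_wpM2l ?ratio_ge0 ?dvec_le.
Qed.

Lemma err_le_dist i j : j != i -> abs (x i - xi i) <= E * abs (x i - x j).
Proof.
move=> ji; apply: le_trans (err_le_ratio_dist ji) _.
by rewrite ler_wpM2r ?abs_ge0 ?ratio_le_Efun.
Qed.

Lemma err_le_distC i j : j != i -> abs (x j - xi j) <= E * abs (x i - x j).
Proof. by move=> ji; rewrite (abs_distC habs (x i)) err_le_dist // eq_sym. Qed.

Lemma twoE_lt1 : 2 * E < 1.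
Proof. by have := d0; have := w1; have := E0; nra. Qed.

Definition err_factor (m : nat) : R := if m is m'.+1 then (w - 1) * phE ^+ m' else 1.
Definition shift_factor (m : nat) : R := if m is 0 then 0 else w.
Definition quot_factor (m : nat) : R := err_factor m / (1 - shift_factor m * E).

Lemma shift_factor_ge0 m : 0 <= shift_factor m.
Proof. by case: m => //= _; apply: le_trans w1. Qed.

Lemma shift_factor_E_lt1 m : shift_factor m * E < 1.
Proof. by case: m => [|m] /=; rewrite ?mul0r //; have := d0; have := w1; have := E0; nra. Qed.

Lemma err_factor_ge0 m : 0 <= err_factor m.
Proof. by case: m => //= m; rewrite mulr_ge0 ?exprn_ge0 ?subr_ge0. Qed.

Lemma err_factorS_le m : err_factor m.+1 <= w - 1.
Proof.
by rewrite /= -[leRHS]mulr1 ler_wpM2l ?subr_ge0 ?exprn_ile1.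
Qed.

Lemma quot_factor_ge0 m : 0 <= quot_factor m.
Proof.
by rewrite divr_ge0 ?err_factor_ge0 // subr_ge0 ltW // shift_factor_E_lt1.
Qed.

Lemma quot_factor_le m : quot_factor m <= phE ^+ m.
Proof.
rewrite /quot_factor; case: m => [|m] /=; first by rewrite mul0r subr0 divr1.
have d1 : 0 < 1 - w * E by have := d0; have := w1; have := E0; nra.
rewrite ler_pdivrMr // exprSr.
have : w - 1 <= phE * (1 - w * E).
  rewrite /phi -ler_pdivrMr // ler_wpM2l ?subr_ge0 // lef_pV2 ?posrE //.
  by have := d0; have := w1; have := E0; nra.
have := exprn_ge0 m phE0; have := phE0; nra.
Qed.

Section Induction.
Variables (m : nat) (y : 'I_n -> K).
Hypothesis y_err : forall j, abs (y j - xi j) <= err_factor m * abs (x j - xi j).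
Hypothesis y_shift : forall j, abs (x j - y j) <= shift_factor m * abs (x j - xi j).

Lemma dist_x_y_ge i j : j != i ->
  abs (x i - x j) * (1 - shift_factor m * E) <= abs (x i - y j).
Proof.
move=> ji; have := absB_ge habs (x i - x j) (y j - x j).
have -> : x i - x j - (y j - x j) = x i - y j by ring.
rewrite (abs_distC habs (y j)).
have : shift_factor m * abs (x j - xi j) <= shift_factor m * (E * abs (x i - x j)).
  by rewrite ler_wpM2l ?shift_factor_ge0 ?err_le_distC.
have := y_shift j; lra.
Qed.

Lemma dist_x_y_gt0 i j : j != i -> 0 < abs (x i - y j).
Proof.
move=> ji; apply: lt_le_trans (dist_x_y_ge ji).
by rewrite mulr_gt0 ?dist_gt0 // subr_gt0 shift_factor_E_lt1.
Qed.

Lemma x_neq_y i j : j != i -> x i != y j.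
Proof. by move=> /dist_x_y_gt0; apply: contraTneq => ->; rewrite subrr abs0 ?ltxx. Qed.

Lemma correction_le i j : j != i ->
  abs ((y j - xi j) / (x i - y j)) <= quot_factor m * t j.
Proof.
move=> ji; have dxy := dist_x_y_gt0 ji; have d1 := shift_factor_E_lt1 m.
rewrite abs_div // ler_pdivrMr //; apply: le_trans (y_err j) _.
have -> : quot_factor m * t j * abs (x i - y j) =
    err_factor m * (t j * (abs (x i - y j) / (1 - shift_factor m * E))).
  by rewrite /quot_factor; field; rewrite gt_eqF // subr_gt0.
rewrite ler_wpM2l ?err_factor_ge0 //; apply: le_trans (_ : t j * abs (x i - x j) <= _).
  by rewrite (abs_distC habs (x i)) err_le_ratio_dist // eq_sym.
by rewrite ler_wpM2l ?ratio_ge0 // ler_pdivlMr ?subr_gt0 ?dist_x_y_ge.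
Qed.

Lemma prod_correction_le i :
  \prod_(j < n | j != i) (1 + abs ((y j - xi j) / (x i - y j))) - 1 <= err_factor m.+1.
Proof.
have q01 : 0 <= quot_factor m <= 1.
  by rewrite quot_factor_ge0 (le_trans (quot_factor_le m)) ?exprn_ile1.
have := @prod1D_le_omega R n p p1 n1 t (fun j => abs ((y j - xi j) / (x i - y j))) i
  (quot_factor m) ratio_ge0 (quot_factor_ge0 m).
move=> /(_ (fun j ji => introT andP (conj (abs_ge0 habs _) (correction_le ji)))).
have := omega_sub1_scale p1 n1 q01 E0.
have : quot_factor m * (w - 1) <= err_factor m.+1.
  by rewrite /= mulrC ler_wpM2l ?subr_ge0 ?quot_factor_le.
lra.
Qed.

End Induction.

Lemma Tmap_bounds m : [/\ inD f m x,
  forall j, abs (Tmap f m x j - xi j) <= err_factor m * abs (x j - xi j)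
  & forall j, abs (x j - Tmap f m x j) <= shift_factor m * abs (x j - xi j)].
Proof.
elim: m => [|m [xD y_err y_shift]].
  by split => // j /=; rewrite ?mul1r // subrr abs0 // mul0r.
have xy i j : j != i -> x i != Tmap f m x j by apply: x_neq_y.
have prod_le := prod_correction_le y_err y_shift.
split => [|i|i].
- by split => // i j ij; rewrite xy // eq_sym.
- have -> : Tmap f m.+1 x i - xi i = - ((x i - xi i) *
    (\prod_(j < n | j != i) (1 + (Tmap f m x j - xi j) / (x i - Tmap f m x j)) - 1)).
    by rewrite mulrBr -(sub_TmapS hf a0 (xy i)) mulr1; ring.
  rewrite absN // absM // mulrC ler_wpM2r ?abs_ge0 //.
  exact: le_trans (abs_prod1D_sub1 habs _ _ _) (prod_le i).
rewrite (sub_TmapS hf a0 (xy i)) absM // abs_prod // mulrC ler_wpM2r ?abs_ge0 //.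
apply: le_trans (_ : \prod_(j < n | j != i)
    (1 + abs ((Tmap f m x j - xi j) / (x i - Tmap f m x j))) <= _).
  apply: ler_prod => j _; rewrite abs_ge0 //=.
  by have := absD_le habs 1 ((Tmap f m x j - xi j) / (x i - Tmap f m x j)); rewrite abs1.
by have := prod_le i; have := err_factorS_le m; rewrite /=; lra.
Qed.

Lemma dist_ge_of_err_le (y : 'I_n -> K) i j :
  (forall k, abs (y k - xi k) <= (w - 1) * abs (x k - xi k)) -> j != i ->
  abs (x i - x j) * (1 - 2 * E * w) <= abs (y i - y j).
Proof.
move=> y_err ji.
have side k : abs ((x k - xi k) - (y k - xi k)) <= w * abs (x k - xi k).
  by apply: le_trans (absB_le habs _ _) _; have := y_err k; lra.
have tri : abs (x i - x j) <= abs (y i - y j) +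
    abs ((x i - xi i) - (y i - xi i)) + abs ((x j - xi j) - (y j - xi j)).
  have -> : x i - x j =
      (y i - y j) + ((x i - xi i) - (y i - xi i)) - ((x j - xi j) - (y j - xi j)) by ring.
  by apply: le_trans (absB_le habs _ _) _; rewrite lerD2r absD_le.
have w0 : 0 <= w := le_trans ler01 w1.
have := le_trans (side i) (ler_wpM2l w0 (err_le_dist ji)).
have := le_trans (side j) (ler_wpM2l w0 (err_le_distC ji)).
nra.
Qed.

Lemma Tmap_step N : (0 < N)%N -> [/\ inD f N x,
  forall i, abs (Tmap f N x i - xi i) <= (w - 1) * phE ^+ N.-1 * abs (x i - xi i),
  forall i j, i != j -> Tmap f N x i != Tmap f N x j
  & Efun abs p xi (Tmap f N x) <= phE ^+ N * E].
Proof.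
case: N => [//|N] _; have [xD y_err _] := Tmap_bounds N.+1.
set y := Tmap f N.+1 x in y_err *.
have y_err' k : abs (y k - xi k) <= (w - 1) * abs (x k - xi k).
  by apply: le_trans (y_err k) _; rewrite ler_wpM2r ?abs_ge0 ?err_factorS_le.
have y_dist i j : j != i -> 0 < abs (y i - y j).
  by move=> ji; apply: lt_le_trans (dist_ge_of_err_le y_err' ji); rewrite mulr_gt0 ?dist_gt0.
have y_neq i j : i != j -> y i != y j.
  by rewrite eq_sym => /y_dist; apply: contraTneq => ->; rewrite subrr abs0 ?ltxx.
split => //.
have dvec_y i : dvec abs x i * (1 - 2 * E * w) <= dvec abs y i.
  apply: dvec_ge => // j ji; apply: le_trans (dist_ge_of_err_le y_err' ji).
  by rewrite ler_wpM2r ?(ltW d0) ?dvec_le.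
have -> : phE ^+ N.+1 = err_factor N.+1 / (1 - 2 * E * w) by rewrite exprS /phi /= mulrAC mulrC.
apply: (pnorm_le_scale p1); first by rewrite divr_ge0 ?err_factor_ge0 ?ltW.
move=> i; have dx := dvec_x_gt0 i.
have dy : 0 < dvec abs y i by apply: dvec_gt0 => // j ji; rewrite y_neq // eq_sym.
have ty0 : 0 <= ratio y i by rewrite divr_ge0 ?abs_ge0 // ltW.
rewrite (ger0_norm ty0) (ger0_norm (ratio_ge0 i)).
rewrite /ratio ler_pdivrMr //; apply: le_trans (y_err i) _.
have -> : err_factor N.+1 / (1 - 2 * E * w) * (abs (x i - xi i) / dvec abs x i) * dvec abs y i
  = err_factor N.+1 * abs (x i - xi i) * (dvec abs y i / (dvec abs x i * (1 - 2 * E * w))).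
  by field; rewrite !gt_eqF.
rewrite -[leLHS]mulr1; apply: ler_wpM2l; first by rewrite mulr_ge0 ?err_factor_ge0 ?abs_ge0.
by rewrite ler_pdivlMr ?mul1r ?mulr_gt0 ?dvec_y.
Qed.

Lemma dist_xi_le i j : j != i -> abs (xi i - xi j) <= abs (x i - x j) * (1 + 2 * E).
Proof.
move=> ji; have -> : xi i - xi j = (x i - x j) - (x i - xi i) + (x j - xi j) by ring.
apply: le_trans (absD_le habs _ _) _.
have := absB_le habs (x i - x j) (x i - xi i).
have := err_le_dist ji; have := err_le_distC ji; lra.
Qed.

Lemma dist_xi_ge i j : j != i -> abs (x i - x j) * (1 - 2 * E) <= abs (xi i - xi j).
Proof.
move=> ji; have := absB_ge habs (x i - x j) ((x i - xi i) - (x j - xi j)).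
have -> : x i - x j - (x i - xi i - (x j - xi j)) = xi i - xi j by ring.
have := absB_le habs (x i - xi i) (x j - xi j).
have := err_le_dist ji; have := err_le_distC ji; lra.
Qed.

Lemma xi_neq i j : i != j -> xi i != xi j.
Proof.
rewrite eq_sym => ji; apply: contraTneq (dist_xi_ge ji) => ->.
by rewrite subrr abs0 // -ltNge mulr_gt0 ?dist_gt0 // subr_gt0 twoE_lt1.
Qed.

Lemma Efun_le_maxerr :
  E <= (\sum_(i < n) 2 / dvec abs xi i) * maxerr abs x xi.
Proof.
have dxi i : 0 < dvec abs xi i by apply: dvec_gt0 => // j ji; rewrite xi_neq // eq_sym.
apply: (le_trans (pnorm_le_sum p1 t)); rewrite mulr_suml; apply: ler_sum => i _.
have dx_ge : dvec abs xi i / 2 <= dvec abs x i.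
  apply: dvec_ge => // j ji; have := dvec_le abs xi ji; have := dist_xi_le ji; have := Psi_le2_half p1 n1 E0 hPsi; have := dist_gt0 ji; nra.
rewrite ger0_norm ?ratio_ge0 // /ratio ler_pdivrMr ?dvec_x_gt0 //.
have ratio_ge1 : 1 <= 2 / dvec abs xi i * dvec abs x i.
  by rewrite mulrAC ler_pdivlMr // mul1r; lra.
apply: le_trans (maxerr_ge abs xi x i) _.
rewrite mulrAC -[leLHS]mul1r.
by apply: ler_wpM2r; rewrite ?maxerr_ge0.
Qed.

End OneStep.

Lemma root_vector_mup_le1 (K : closedFieldType) n (f : {poly K}) (xi : 'I_n -> K) :
  root_vector f xi -> lead_coef f != 0 -> (forall i j, i != j -> xi i != xi j) ->
  forall z, (mup z f <= 1)%N.
Proof.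
move=> hf a0 xi_inj z; set q := \prod_(i < n) ('X - (xi i)%:P).
have fE : f = lead_coef f *: q.
  apply/eqP; rewrite -subr_eq0; set g := f - _.
  have g0 y : g.[y] = 0.
    rewrite /g hornerD hornerN hornerZ /q horner_prod hf.
    by under eq_bigr do rewrite hornerXsubC; rewrite subrr.
  (* over a closed field, a polynomial vanishing everywhere is constant, hence zero *)
  have [g1|g1] := eqVneq (size (g - 1)) 1%N.
    have [c _ gc] := size_poly1P _ (introT eqP g1).
    have gC : g = (c + 1)%:P by rewrite polyCD -gc subrK.
    by have := g0 0; rewrite gC hornerC => ->.
  have [y] := closed_rootP _ g1.
  by rewrite /root hornerD hornerN g0 hornerC add0r oppr_eq0 oner_eq0.
rewrite fE -mul_polyC mupMr; last by rewrite /root hornerC.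
have -> : q = \prod_(y <- [seq xi i | i <- enum 'I_n]) ('X - y%:P) by rewrite big_map big_enum.
rewrite mu_prod_XsubC count_uniq_mem ?leq_b1 // map_inj_uniq ?enum_uniq // => i j xij.
by apply/eqP; apply: contraTT (introT eqP xij) => /xi_inj.
Qed.

Lemma cvg0_geometric_bound (R : realType) (u : nat -> R) (q C : R) : 0 <= q < 1 ->
  (forall k, 0 <= u k <= C * q ^+ k) -> u @ \oo --> (0 : R).
Proof.
move=> /andP[q0 q1] hu.
apply: (@squeeze_cvgr _ _ _ _ (cst 0) (fun k => C * q ^+ k)).
- by apply: nearW => k; exact: hu.
- exact: cvg_cst.
by apply: cvg_geometric; rewrite ger0_norm.
Qed.

Lemma expnS_sub1 (N k : nat) : (N * N.+1 ^ k + (N.+1 ^ k - 1) = N.+1 ^ k.+1 - 1)%N.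
Proof. by rewrite expnS; have := expn_gt0 N.+1 k; lia. Qed.

Section Iteration.
Variables (K : fieldType) (R : realType) (abs : K -> R) (n : nat).
Variables (f : {poly K}) (xi : 'I_n -> K) (N : nat) (p : \bar R) (x0 : 'I_n -> K).
Hypotheses (habs : is_abs abs) (n1 : (1 < n)%N) (hf : root_vector f xi).
Hypotheses (a0 : lead_coef f != 0) (N1 : (0 < N)%N) (p1 : (1 <= p)%E).
Hypotheses (hx0 : forall i j, i != j -> x0 i != x0 j).
Hypothesis (hPsi0 : Psi n p (Efun abs p xi x0) <= 2).

Local Notation xk k := (iterT f N x0 k).
Local Notation Ek k := (Efun abs p xi (xk k)).
Local Notation E0 := (Efun abs p xi x0).
Local Notation lam := (phi n p E0).

Let Efun0 x : 0 <= Efun abs p xi x. Proof. exact: Efun_ge0. Qed.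
Let lam0 : 0 <= lam. Proof. exact: phi_ge0. Qed.

Lemma iter_invariant k : [/\ forall i j, i != j -> xk k i != xk k j,
  Psi n p (Ek k) <= 2, Ek k <= E0 & phi n p (Ek k) <= lam ^+ (N.+1 ^ k)].
Proof.
elim: k => [|k [xk_inj Psi_k Ek_le phi_k]]; first by split.
have [_ _ xkS_inj EkS_le] := Tmap_step habs n1 hf a0 p1 xk_inj Psi_k N1.
have phk0 := phi_ge0 p1 n1 (Efun0 _) Psi_k; have phk1 := phi_le1 p1 n1 (Efun0 _) Psi_k.
have phN01 : 0 <= phi n p (Ek k) ^+ N <= 1 by rewrite exprn_ge0 ?exprn_ile1.
have EkS : Ek k.+1 <= Ek k.
  by apply: le_trans EkS_le _; rewrite ler_piMl ?Efun0 //; case/andP: phN01.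
split => //; first exact: le_trans (Psi_le p1 n1 (Efun0 _) EkS) Psi_k.
- exact: le_trans EkS Ek_le.
apply: le_trans (phi_le_scale p1 n1 (Efun0 _) Psi_k phN01 (Efun0 _) EkS_le) _.
by rewrite -exprSr expnSr exprM lerXn2r ?nnegrE ?exprn_ge0.
Qed.

Lemma iter_err_step k i : abs (xk k.+1 i - xi i) <=
  (omega n p (Ek k) - 1) * phi n p (Ek k) ^+ N.-1 * abs (xk k i - xi i).
Proof.
have [xk_inj Psi_k _ _] := iter_invariant k.
by have [_ step _ _] := Tmap_step habs n1 hf a0 p1 xk_inj Psi_k N1; apply: step.
Qed.

Lemma iter_err_step_phi k i :
  abs (xk k.+1 i - xi i) <= phi n p (Ek k) ^+ N * abs (xk k i - xi i).
Proof.
have [_ Psi_k _ _] := iter_invariant k.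
have phk0 := phi_ge0 p1 n1 (Efun0 _) Psi_k.
apply: le_trans (iter_err_step k i) _; apply: ler_wpM2r; first exact: abs_ge0.
have -> : phi n p (Ek k) ^+ N = phi n p (Ek k) * phi n p (Ek k) ^+ N.-1.
  by rewrite -exprS prednK.
apply: ler_wpM2r; first exact: exprn_ge0.
exact: omega_sub1_le_phi.
Qed.

Lemma iter_err_step_lambda k i :
  abs (xk k.+1 i - xi i) <= lam ^+ (N * N.+1 ^ k) * abs (xk k i - xi i).
Proof.
have [_ Psi_k _ phi_k] := iter_invariant k.
apply: le_trans (iter_err_step_phi k i) _; rewrite ler_wpM2r ?abs_ge0 //.
have phk0 := phi_ge0 p1 n1 (Efun0 _) Psi_k.
by rewrite mulnC exprM lerXn2r ?nnegrE ?exprn_ge0.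
Qed.

Lemma iter_err_le_lambda k i :
  abs (xk k i - xi i) <= lam ^+ (N.+1 ^ k - 1) * abs (x0 i - xi i).
Proof.
elim: k => [|k IH]; first by rewrite expn0 subnn expr0 mul1r.
apply: le_trans (iter_err_step_lambda k i) _.
by rewrite -expnS_sub1 exprD -mulrA ler_wpM2l // exprn_ge0.
Qed.

Lemma iter_err_step_geometric k i :
  abs (xk k.+1 i - xi i) <= (omega n p E0 - 1) * abs (xk k i - xi i).
Proof.
have [_ Psi_k Ek_le _] := iter_invariant k.
apply: le_trans (iter_err_step k i) _; rewrite ler_wpM2r ?abs_ge0 //.
apply: (@le_trans _ _ (omega n p (Ek k) - 1)).
  rewrite -[leRHS]mulr1 ler_wpM2l ?subr_ge0 ?omega_ge1 ?Efun0 //.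
  by rewrite exprn_ile1 ?phi_ge0 ?phi_le1 ?Efun0.
by rewrite lerD2r omega_le ?Efun0.
Qed.

(* omega(E0) - 1 < 1 even when Psi(E0) = 2, in which case lambda = 1. *)
Lemma iter_err_cvg0 i : (fun k => abs (xk k i - xi i)) @ \oo --> (0 : R).
Proof.
apply: (@cvg0_geometric_bound R _ (omega n p E0 - 1) (abs (x0 i - xi i))).
  have := omega_lt2 p1 n1 (Efun0 _) hPsi0.
  by rewrite subr_ge0 omega_ge1 ?Efun0 //=; lra.
move=> k; rewrite abs_ge0 //=; elim: k => [|k IH]; first by rewrite expr0 mulr1.
apply: le_trans (iter_err_step_geometric k i) _.
rewrite exprS mulrCA ler_wpM2l // subr_ge0 omega_ge1 ?Efun0 //.
Qed.

Lemma iter_err_order : exists C : R, forall k,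
  maxerr abs (xk k.+1) xi <= C * maxerr abs (xk k) xi ^+ N.+1.
Proof.
set c := \sum_(i < n) 2 / dvec abs xi i.
set kappa := (omega n p 1 - 1) / (1 - 2 * E0 * omega n p E0).
have c0 : 0 <= c.
  apply: sumr_ge0 => i _; rewrite divr_ge0 // ltW //.
  by apply: dvec_gt0 => // j ji; rewrite (xi_neq habs n1 p1 hx0 hPsi0) // eq_sym.
have kappa0 : 0 <= kappa.
  apply: divr_ge0; first by rewrite subr_ge0 (omega_ge1 p1 n1 ler01).
  exact: ltW (phi_den_gt0 p1 n1 (Efun0 _) hPsi0).
exists ((kappa * c) ^+ N) => k; have [xk_inj Psi_k Ek_le _] := iter_invariant k.
set M := maxerr abs (xk k) xi.
have phik : phi n p (Ek k) <= kappa * c * M.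
  apply: le_trans (phi_le_linear p1 n1 (Efun0 _) hPsi0 (Efun0 _) Ek_le) _.
  rewrite -/kappa mulrC -mulrA; apply: (ler_wpM2l kappa0).
  by rewrite /c /M; apply: Efun_le_maxerr.
have M0 : 0 <= M := maxerr_ge0 abs xi (xk k).
have phk0 := phi_ge0 p1 n1 (Efun0 _) Psi_k.
apply: bigmax_le => [|i _].
  exact: mulr_ge0 (exprn_ge0 _ (mulr_ge0 kappa0 c0)) (exprn_ge0 _ M0).
apply: le_trans (iter_err_step_phi k i) _; rewrite exprSr mulrA -exprMn.
have kcM0 : 0 <= kappa * c * M := mulr_ge0 (mulr_ge0 kappa0 c0) M0.
apply: ler_pM; [exact: exprn_ge0 | exact: abs_ge0 | | exact: maxerr_ge].
by apply: lerXn2r; rewrite ?nnegrE.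
Qed.

End Iteration.

Theorem corollary2p12 (K : closedFieldType) (R : realType) (abs : K -> R)
  (habs : is_abs abs) (n : nat) (f : {poly K}) (xi : 'I_n -> K) (N : nat)
  (p : \bar R) (x0 : 'I_n -> K) :
  (2 <= n)%N -> size f = n.+1 -> root_vector f xi -> (1 <= N)%N ->
  (1 <= p)%E ->
  (forall i j : 'I_n, i != j -> x0 i != x0 j) ->
  Psi n p (Efun abs p xi x0) <= 2 ->
  let lambda := phi n p (Efun abs p xi x0) in
  (forall z : K, (mup z f <= 1)%N) /\
  [/\ 
      (forall k, inD f N (iterT f N x0 k)),
      (forall i : 'I_n, (fun k => abs (iterT f N x0 k i - xi i)) @ \oo --> (0 : R)),
      (forall k (i : 'I_n),
         abs (iterT f N x0 k.+1 i - xi i)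
           <= lambda ^+ (N * (N.+1) ^ k) * abs (iterT f N x0 k i - xi i)),
      (forall k (i : 'I_n),
         abs (iterT f N x0 k i - xi i)
           <= lambda ^+ ((N.+1) ^ k - 1) * abs (x0 i - xi i))
    & (Psi n p (Efun abs p xi x0) < 2 ->
         conv_order abs (iterT f N x0) xi N.+1)].
Proof.
move=> n1 size_f hf N1 p1 hx0 hPsi0 lambda.
have a0 : lead_coef f != 0 by rewrite lead_coef_eq0 -size_poly_gt0 size_f.
have err_cvg0 := iter_err_cvg0 habs n1 hf a0 N1 p1 hx0 hPsi0.
split; first exact: root_vector_mup_le1 hf a0 (xi_neq habs n1 p1 hx0 hPsi0).
split => //.
- move=> k; have [xk_inj Psi_k _ _] := iter_invariant habs n1 hf a0 N1 p1 hx0 hPsi0 k.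
  by have [xD _ _ _] := Tmap_step habs n1 hf a0 p1 xk_inj Psi_k N1.
- exact: iter_err_step_lambda habs n1 hf a0 N1 p1 hx0 hPsi0.
- exact: iter_err_le_lambda habs n1 hf a0 N1 p1 hx0 hPsi0.
(* the order bound needs only Psi <= 2 *)
by move=> _; split => //; apply: iter_err_order habs n1 hf a0 N1 p1 hx0 hPsi0.
Qed.
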